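(* The lattice of subvarieties of the monoid variety $\mathbf M(xyx)\vee\mathbf M_\gamma(xx^+yy^+)$ is not modular.
   Context: Words are elements of the free monoid $\mathfrak X^\ast$ over a countably infinite alphabet. For a set $W$ of words, $M(W)$ is the Rees quotient of $\mathfrak X^\ast$ by the ideal of all words that are not factors of any word in $W$; $\mathbf M(xyx)$ is the monoid variety generated by $M(\{xyx\})$. A letter is simple in a word if it occurs exactly once. The congruence $\gamma$: $\mathbf u\mathrel\gamma\mathbf v$ iff $\mathbf u,\mathbf v$ have the same simple letters and $\mathbf u$ is obtained from $\mathbf v$ by changing individual exponents of letters ($\mathbf u=x_1^{e_1}\cdots x_r^{e_r}$, $\mathbf v=x_1^{f_1}\cdots x_r^{f_r}$, $e_i,f_i\ge1$). For $\gamma$-classes, $\mathtt v\le\mathtt u$ if $\mathtt u=\mathtt p\mathtt v\mathtt s$ for $\gamma$-classes $\mathtt p,\mathtt s$; for a set $\mathtt W$ of $\gamma$-classes, $M_\gamma(\mathtt W)$ is the Rees quotient of $\mathfrak X^\ast/\gamma$ by the ideal of $\gamma$-classes not $\le$ any member of $\mathtt W$. $xx^+yy^+$ is the $\gamma$-class of $x^2y^2$, and $\mathbf M_\gamma(xx^+yy^+)$ is the monoid variety generated by $M_\gamma(\{xx^+yy^+\})$. $\vee$ denotes join of varieties. *)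

From Stdlib Require Import ClassicalEpsilon.
From mathcomp Require Import all_boot.
Set Implicit Arguments. Unset Strict Implicit. Unset Printing Implicit Defensive.

Definition word := seq nat.

Record magma := Magma { car :> Type; mmul : car -> car -> car; mone : car }.

Definition is_monoid (M : magma) : Prop :=
  [/\ forall a b c : M, mmul a (mmul b c) = mmul (mmul a b) c,
      forall a : M, mmul (mone M) a = a
    & forall a : M, mmul a (mone M) = a].

Definition eval (M : magma) (f : nat -> M) (w : word) : M :=
  foldr (fun a acc => mmul (f a) acc) (mone M) w.

Definition sat (M : magma) (u v : word) : Prop :=
  forall f : nat -> M, eval f u = eval f v.

Definition mclass := magma -> Prop.

Definition is_variety (K : mclass) : Prop :=
  exists S : word -> word -> Prop,
    forall M, K M <-> (is_monoid M /\ forall u v, S u v -> sat M u v).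

Definition var_gen (G : mclass) : mclass :=
  fun M => is_monoid M /\ forall u v, (forall A, G A -> sat A u v) -> sat M u v.

Definition vjoin (K1 K2 : mclass) : mclass := var_gen (fun A => K1 A \/ K2 A).
Definition vmeet (K1 K2 : mclass) : mclass := fun M => K1 M /\ K2 M.
Definition vsub (K1 K2 : mclass) : Prop := forall M, K1 M -> K2 M.
Definition veq (K1 K2 : mclass) : Prop := forall M, K1 M <-> K2 M.

Definition subvariety (K V : mclass) : Prop := is_variety K /\ vsub K V.

Definition subvar_lattice_modular (V : mclass) : Prop :=
  forall X Y Z, subvariety X V -> subvariety Y V -> subvariety Z V ->
    vsub X Z -> veq (vjoin X (vmeet Y Z)) (vmeet (vjoin X Y) Z).

(** Rees quotient of the free monoid modulo a congruence presented by a
    canonical-form map [canon] (u and v congruent iff canon u = canon v),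
    by the ideal of classes that are not [<=] any class in W.
    Elements: [Some w] with w a canonical word whose class divides the class
    of some member of W, and [None] = 0. *)
Section Rees.
Variable canon : word -> word.
Variable W : seq word.

Definition rees_ok (w : word) : Prop :=
  canon w = w /\ exists u, u \in W /\ exists p s, canon (p ++ w ++ s) = canon u.

Definition rees_car := option {w : word | rees_ok w}.

Definition rees_mk (w : word) : rees_car :=
  match excluded_middle_informative (rees_ok w) with
  | left h => Some (exist _ w h)
  | right _ => None
  end.

Definition rees_mul (x y : rees_car) : rees_car :=
  match x, y with
  | Some a, Some b => rees_mk (canon (proj1_sig a ++ proj1_sig b))
  | _, _ => None
  end.

Definition rees_magma : magma := Magma rees_mul (rees_mk (canon [::])).
End Rees.

(** M(W): canon is the identity (the free monoid itself); [<=] is "is a factor of". *)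
Definition M_of (W : seq word) : magma := rees_magma id W.

(** The congruence gamma, via a canonical representative of each gamma-class:
    a word is determined up to gamma by its block sequence (compress) and its set of
    simple letters.  In the canonical representative each block x^e is written
    x if x is simple or x occurs in several blocks, and xx if x is a non-simple
    letter occupying a single block. *)
Fixpoint compress (w : word) : word :=
  match w with
  | [::] => [::]
  | a :: t =>
      let c := compress t in
      if c is b :: _ then (if a == b then c else a :: c) else [:: a]
  end.

Definition simple_letter (a : nat) (w : word) : bool := count_mem a w == 1.

Definition gamma_canon (w : word) : word :=
  flatten [seq (if simple_letter a w then [:: a]
                else if count_mem a (compress w) == 1 then [:: a; a] else [:: a])
          | a <- compress w].

Definition gamma (u v : word) : Prop := gamma_canon u = gamma_canon v.

Definition Mgamma_of (W : seq word) : magma := rees_magma gamma_canon W.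

(** Letters x = 0, y = 1. *)
Definition w_xyx : word := [:: 0; 1; 0].
Definition w_xxyy : word := [:: 0; 0; 1; 1].  (* representative of xx^+yy^+ *)

Definition var_of (A : magma) : mclass := var_gen (fun B => B = A).

Definition V_main : mclass :=
  vjoin (var_of (M_of [:: w_xyx])) (var_of (Mgamma_of [:: w_xxyy])).

From Pilot Require Import Defs.
From mathcomp Require Import all_boot.
From Stdlib Require Import ClassicalEpsilon.
Set Implicit Arguments. Unset Strict Implicit. Unset Printing Implicit Defensive.

(* The subvarieties X = var MA, Y = var MB and Z = var MA \/ var MC of V form a
   pentagon, where MA and MB are copies of M(xyx) and M_gamma(xx^+yy^+), and MC
   is the Rees quotient of the submonoid of MA x MB generated by (x,x), (y,1),
   (1,y) over the ideal of pairs with a zero coordinate.  MC lies in X \/ Y and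
   in Z, so in (X \/ Y) /\ Z.  Every monoid of X, and of Y /\ Z, satisfies
   sigma : xsxyy = xsyxy: MA does, and in Y /\ Z sigma follows from the
   identities xsxyy = xxsxyy and xxsyxy = xsyxy of MB together with the identity
   tau : xxsxyy = xxsyxy of Z.  Since MC violates sigma, MC is not in
   X \/ (Y /\ Z), and modularity fails. *)

Lemma eval_eq_in (M : magma) (f g : nat -> M) (w : word) :
  {in w, f =1 g} -> eval f w = eval g w.
Proof.
elim: w => [|a w IHw] //= fg.
by rewrite fg ?mem_head // IHw // => k wk; rewrite fg // inE wk orbT.
Qed.

Lemma eval_morph (M N : magma) (h : M -> N) :
  {morph h : a b / mmul a b} -> h (mone M) = mone N ->
  forall (f : nat -> M) w, h (eval f w) = eval (h \o f) w.
Proof. by move=> hM h1 f; elim=> [|a w IHw] //=; rewrite hM IHw. Qed.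

Lemma sat_inj_morph (M N : magma) (h : M -> N) :
  {morph h : a b / mmul a b} -> h (mone M) = mone N -> injective h ->
  forall u v, sat N u v -> sat M u v.
Proof. by move=> hM h1 h_inj u v Nuv f; apply: h_inj; rewrite !(eval_morph hM h1). Qed.

Definition prod_magma (A B : magma) : magma :=
  @Defs.Magma (A * B)%type (fun p q => (mmul p.1 q.1, mmul p.2 q.2)) (mone A, mone B).

Lemma eval_prod (A B : magma) (f : nat -> prod_magma A B) w :
  eval f w = (eval (fst \o f) w, eval (snd \o f) w).
Proof. by elim: w => [|a w IHw] //=; rewrite IHw. Qed.

Lemma sat_prod (A B : magma) u v : sat A u v -> sat B u v -> sat (prod_magma A B) u v.
Proof. by move=> Auv Buv f; rewrite !eval_prod Auv Buv. Qed.

Lemma sat_lifting (D C : magma) (lift : C -> D) (proj : D -> C) (S : D -> Prop) :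
  S (mone D) -> proj (mone D) = mone C ->
  (forall m p, S p -> S (mmul (lift m) p) /\ proj (mmul (lift m) p) = mmul m (proj p)) ->
  forall u v, sat D u v -> sat C u v.
Proof.
move=> S1 proj1 S_lift u v Duv f.
have eval_lift w : S (eval (lift \o f) w) /\ proj (eval (lift \o f) w) = eval f w.
  elim: w => [|a w [Sw ew]] //=; rewrite -ew; exact: S_lift.
by rewrite -(eval_lift u).2 -(eval_lift v).2 Duv.
Qed.

Lemma var_gen_variety (G : mclass) : is_variety (var_gen G).
Proof. by exists (fun u v => forall A, G A -> sat A u v). Qed.

Lemma var_gen_mem (G : mclass) (A : magma) : is_monoid A -> G A -> var_gen G A.
Proof. by move=> monA GA; split=> // u v /(_ A GA). Qed.

Lemma var_gen_sub (G H : mclass) :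
  (forall A, G A -> var_gen H A) -> vsub (var_gen G) (var_gen H).
Proof.
move=> GH M [monM GM]; split=> // u v Huv.
by apply: GM => A /GH [_]; apply.
Qed.

Lemma var_of_self (A : magma) : is_monoid A -> var_of A A.
Proof. by move=> monA; exact: var_gen_mem. Qed.

Lemma var_of_sat (A M : magma) u v : var_of A M -> sat A u v -> sat M u v.
Proof. by case=> _ AM Auv; apply: AM => B ->. Qed.

Lemma var_of_sub (A : magma) (H : mclass) : var_gen H A -> vsub (var_of A) (var_gen H).
Proof. by move=> HA; apply: var_gen_sub => B ->. Qed.

Lemma vjoin_mem (K L : mclass) (A B M : magma) :
  K A -> L B -> is_monoid M -> (forall u v, sat A u v -> sat B u v -> sat M u v) ->
  vjoin K L M.
Proof.
move=> KA LB monM AB_M; split=> // u v KL_uv.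
by apply: AB_M; apply: KL_uv; [left | right].
Qed.

Section FiniteMagmas.
Variables (n : nat) (mul : 'I_n.+1 -> 'I_n.+1 -> 'I_n.+1) (one : 'I_n.+1).
Local Notation FM := (Defs.Magma mul one).

(* [enum 'I_n.+1] is stuck under [vm_compute] (its [insub] proofs are opaque),
   so finite checks run over this explicit enumeration instead. *)
Definition ords : seq 'I_n.+1 := [seq Ordinal (ltn_pmod k (ltn0Sn n)) | k <- iota 0 n.+1].

Definition all_ord (P : pred 'I_n.+1) : bool := all P ords.

Lemma all_ordP (P : pred 'I_n.+1) : all_ord P -> forall a, P a.
Proof.
move=> /allP allP a; apply: allP; apply/mapP; exists (val a).
  by rewrite mem_iota ltn_ord.
by apply: val_inj; rewrite /= modn_small.
Qed.

Lemma finite_monoid :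
  all_ord (fun a => all_ord (fun b => all_ord (fun c =>
    mul a (mul b c) == mul (mul a b) c))) ->
  all_ord (fun a => (mul one a == a) && (mul a one == a)) ->
  is_monoid FM.
Proof.
move=> assoc unit; split=> [a b c|a|a].
- exact/eqP/(all_ordP (all_ordP (all_ordP assoc a) b) c).
- by have /andP[/eqP] := all_ordP unit a.
- by have /andP[_ /eqP] := all_ordP unit a.
Qed.

Definition assign3 (a b c : 'I_n.+1) (k : nat) : 'I_n.+1 := nth a [:: a; b; c] k.

Lemma finite_sat3 (u v : word) :
  all (gtn 3) u -> all (gtn 3) v ->
  all_ord (fun a => all_ord (fun b => all_ord (fun c =>
    eval (M := FM) (assign3 a b c) u == eval (M := FM) (assign3 a b c) v))) ->
  sat FM u v.
Proof.
move=> /allP u3 /allP v3 uv f.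
have eval3 w : {in w, forall k, 3 > k} ->
    eval f w = eval (M := FM) (assign3 (f 0) (f 1) (f 2)) w.
  by move=> w3; apply: eval_eq_in => k /w3; case: k => [|[|[|]]].
by rewrite eval3 // [RHS]eval3 //; apply/eqP/(all_ordP (all_ordP (all_ordP uv _) _)).
Qed.

End FiniteMagmas.

Section ListMagma.
Variables (T : eqType) (op : T -> T -> T) (e : T) (s : seq T).

(* The elements are the items of [s] followed by an adjoined zero [ord_max];
   a product falling outside [s] is sent to that zero. *)
Definition lm_of (a : T) : 'I_(size s).+1 := @Ordinal (size s).+1 (index a s) (index_size a s).

Definition lm_mul (i j : 'I_(size s).+1) : 'I_(size s).+1 :=
  if (i < size s) && (j < size s) then lm_of (op (nth e s i) (nth e s j)) else ord_max.

Definition list_magma : magma := Defs.Magma lm_mul (lm_of e).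

End ListMagma.

Section ReesTable.
Variables (canon : word -> word) (W s : seq word) (bad : pred word).
Hypotheses (s_ok : {in s, forall w, rees_ok canon W w})
  (bad_nok : forall w, bad w -> ~ rees_ok canon W w)
  (s_closed : all2rel (fun a b => (canon (a ++ b) \in s) || bad (canon (a ++ b))) s)
  (s_uniq : uniq s) (s_one : canon [::] \in s).

Lemma rees_mk_ok w : rees_ok canon W w -> exists p, rees_mk canon W w = Some (exist _ w p).
Proof. by rewrite /rees_mk; case: excluded_middle_informative => // p _; exists p. Qed.

Lemma rees_mk_nok w : ~ rees_ok canon W w -> rees_mk canon W w = None.
Proof. by rewrite /rees_mk; case: excluded_middle_informative. Qed.

Definition rees_table : magma := list_magma (fun a b => canon (a ++ b)) (canon [::]) s.

Definition to_rees (i : rees_table) : rees_magma canon W :=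
  if i < size s then rees_mk canon W (nth (canon [::]) s i) else None.

Lemma to_rees_sval i :
  omap sval (to_rees i : rees_car canon W) =
  if i < size s then Some (nth (canon [::]) s i) else None.
Proof.
rewrite /to_rees; case: ifP => // lt_i_s.
by have [p ->] := rees_mk_ok (s_ok (mem_nth (canon [::]) lt_i_s)).
Qed.

Lemma to_rees_inj : injective to_rees.
Proof.
move=> i j /(congr1 (fun x : rees_car canon W => omap sval x)); rewrite !to_rees_sval.
case: (ltnP i (size s)) => [lt_i_s|le_s_i]; case: (ltnP j (size s)) => [lt_j_s|le_s_j].
- by case=> /eqP; rewrite nth_uniq // => /eqP/val_inj.
- by [].
- by [].
- move=> _; apply/val_inj/eqP.
  by rewrite eqn_leq (leq_trans _ le_s_j) ?(leq_trans _ le_s_i) // -ltnS ltn_ord.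
Qed.

Lemma to_rees_one : to_rees (mone rees_table) = mone (rees_magma canon W).
Proof. by rewrite /to_rees /= index_mem s_one nth_index. Qed.

Lemma to_rees_mul : {morph to_rees : i j / mmul i j}.
Proof.
move=> i j; rewrite /= /lm_mul.
have to_rees_out (k : rees_table) : size s <= k -> to_rees k = None.
  by rewrite /to_rees ltnNge => ->.
have to_rees_zero : to_rees ord_max = None by rewrite to_rees_out.
case: (ltnP i (size s)) => [lt_i_s|le_s_i]; last by rewrite to_rees_zero to_rees_out.
case: (ltnP j (size s)) => [lt_j_s|le_s_j]; last first.
  by rewrite to_rees_zero (to_rees_out j) //; case: (to_rees i).
rewrite /to_rees lt_i_s lt_j_s /=.
have [pi ->] := rees_mk_ok (s_ok (mem_nth (canon [::]) lt_i_s)).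
have [pj ->] := rees_mk_ok (s_ok (mem_nth (canon [::]) lt_j_s)) => /=.
set w := canon _.
have /orP[s_w|bad_w] :=
  allrelP s_closed _ _ (mem_nth (canon [::]) lt_i_s) (mem_nth (canon [::]) lt_j_s).
  by rewrite index_mem s_w nth_index.
have w_nok := bad_nok bad_w.
by rewrite memNindex ?ltnn ?rees_mk_nok //; apply/negP => /s_ok.
Qed.

Lemma var_rees_table : is_monoid rees_table -> var_of (rees_magma canon W) rees_table.
Proof.
move=> mon; split=> // u v /(_ _ erefl).
exact: sat_inj_morph to_rees_mul to_rees_one to_rees_inj u v.
Qed.

End ReesTable.

Lemma rees_ok_id (W : seq word) w : rees_ok id W w <-> has (infix w) W.
Proof.
split=> [[_ [u [Wu [p [s /= pws]]]]] | /hasP[u Wu /infixP[p [s pws]]]].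
  by apply/hasP; exists u => //; apply/infixP; exists p, s.
by split=> //; exists u; split=> //; exists p, s.
Qed.

Lemma compress_cons c t :
  compress (c :: t) = if ohead (compress t) == Some c then compress t else c :: compress t.
Proof. by rewrite /=; case: (compress t) => //= d r; rewrite (inj_eq Some_inj) eq_sym. Qed.

Lemma mem_compress z : compress z =i z.
Proof.
elim: z => [|c t IHt] // a; rewrite compress_cons.
case: ifP => [hd_c|_]; last by rewrite !inE IHt.
rewrite inE -IHt; case: eqVneq => // ->.
by case: (compress t) hd_c => //= d r /eqP[->]; exact: mem_head.
Qed.

Lemma subseq2_compress a b z :
  a != b -> subseq [:: a; b] z -> subseq [:: a; b] (compress z).
Proof.
move=> ab; elim: z => [|c t IHt] //; rewrite compress_cons.
case: (eqVneq a c) => [<-{c}|ac]; last first.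
  rewrite /= (negbTE ac) => /IHt sub.
  by case: ifP => _ //; exact: subseq_trans sub (subseq_cons _ _).
rewrite /= eqxx sub1seq -mem_compress => bt.
case: ifP => [hd_a|_]; last by rewrite /= eqxx sub1seq.
case: (compress t) bt hd_a => //= d r bt /eqP[da]; subst d.
by rewrite eqxx sub1seq; move: bt; rewrite inE (eq_sym b) (negbTE ab).
Qed.

Lemma subseq_flatten_map (T : eqType) (h : T -> seq T) (s : seq T) :
  (forall a, exists t, h a = a :: t) -> subseq s (flatten (map h s)).
Proof.
move=> hP; elim: s => [|a s IHs] //=; have [t ->] := hP a.
by rewrite /= eqxx; exact: subseq_trans IHs (suffix_subseq t _).
Qed.

Lemma subseq2_gamma_canon a b z :
  a != b -> subseq [:: a; b] z -> subseq [:: a; b] (gamma_canon z).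
Proof.
move=> ab /(subseq2_compress ab) sub; apply: subseq_trans sub _.
apply: subseq_flatten_map => c.
by case: ifP => _; [exists [::] | case: ifP => _; [exists [:: c] | exists [::]]].
Qed.

Lemma gamma_rees_nok (W : seq word) a b w :
  a != b -> all (fun u => ~~ subseq [:: a; b] (gamma_canon u)) W ->
  subseq [:: a; b] w -> ~ rees_ok gamma_canon W w.
Proof.
move=> ab /allP W_ab w_ab [_ [u [Wu [p [s gamma_u]]]]].
have := W_ab u Wu; rewrite -gamma_u (subseq2_gamma_canon ab) //.
exact: subseq_trans w_ab (subseq_trans (prefix_subseq w s) (suffix_subseq p _)).
Qed.

Definition wordsA : seq word := [:: [::]; [:: 0]; [:: 1]; [:: 0; 1]; [:: 1; 0]; w_xyx].
Definition MA : magma := rees_table id wordsA.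

Lemma MA_monoid : is_monoid MA.
Proof. by apply: finite_monoid; vm_compute. Qed.

Lemma var_MA : var_of (M_of [:: w_xyx]) MA.
Proof.
apply: (var_rees_table (bad := fun w => ~~ infix w w_xyx)) MA_monoid.
- by move=> w wA; apply/rees_ok_id; move: w wA; apply/allP; vm_compute.
- by move=> w w_nok /rees_ok_id; rewrite /= orbF; exact/negP.
- by vm_compute.
- by vm_compute.
- by vm_compute.
Qed.

Definition wordsB : seq word :=
  [:: [::]; [:: 0]; [:: 1]; [:: 0; 0]; [:: 0; 1]; [:: 1; 1]; [:: 0; 0; 1]; [:: 0; 1; 1]; w_xxyy].
Definition MB : magma := rees_table gamma_canon wordsB.

Lemma MB_monoid : is_monoid MB.
Proof. by apply: finite_monoid; vm_compute. Qed.

Lemma var_MB : var_of (Mgamma_of [:: w_xxyy]) MB.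
Proof.
apply: (var_rees_table (bad := subseq [:: 1; 0])) MB_monoid.
- have wB_ok : all (fun w => (gamma_canon w == w) &&
      (gamma_canon ([:: 0; 0] ++ w ++ [:: 1; 1]) == gamma_canon w_xxyy)) wordsB.
    by vm_compute.
  move=> w /(allP wB_ok) /andP[/eqP gamma_w /eqP w_le]; split=> //.
  by exists w_xxyy; split; [exact: mem_head | exists [:: 0; 0], [:: 1; 1]].
- by move=> w; apply: gamma_rees_nok; vm_compute.
- by vm_compute.
- by vm_compute.
- by vm_compute.
Qed.

Definition MAB : magma := prod_magma MA MB.

(* Letters x = 0, s = 1, y = 2. *)
Definition psi (k : nat) : MAB :=
  nth (mone MAB) [:: (lm_of wordsA [:: 0], lm_of wordsB [:: 0]);
                     (lm_of wordsA [:: 1], mone MB);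
                     (mone MA, lm_of wordsB [:: 1])] k.

Definition wordsC : seq word :=
  [:: [::]; [:: 2]; [:: 2; 2]; [:: 0]; [:: 0; 2]; [:: 0; 2; 2];
      [:: 1]; [:: 1; 2]; [:: 1; 2; 2]; [:: 0; 1]; [:: 0; 1; 2]; [:: 0; 1; 2; 2];
      [:: 1; 0]; [:: 1; 0; 2]; [:: 1; 0; 2; 2];
      [:: 0; 1; 0]; [:: 0; 1; 0; 2]; [:: 0; 1; 0; 2; 2]].

Definition elemsC : seq MAB := map (eval psi) wordsC.

Definition MC : magma := list_magma (@mmul MAB) (mone MAB) elemsC.

Lemma MC_monoid : is_monoid MC.
Proof. by apply: finite_monoid; vm_compute. Qed.

Definition liftC (m : MC) : MAB :=
  if m < size elemsC then nth (mone MAB) elemsC m else (ord_max, ord_max).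

(* The pairs with a zero coordinate form the ideal that MC collapses to its zero. *)
Definition C_domain (p : MAB) : bool := [|| p \in elemsC, p.1 == ord_max | p.2 == ord_max].

Lemma MC_sat u v : sat MA u v -> sat MB u v -> sat MC u v.
Proof.
move=> Auv Buv.
have cover : all_ord (fun m : MC => all_ord (fun a : MA => all_ord (fun b : MB =>
    C_domain (a, b) ==> C_domain (mmul (liftC m) (a, b)) &&
    (lm_of elemsC (mmul (liftC m) (a, b)) == mmul m (lm_of elemsC (a, b)))))).
  by vm_compute.
apply: (@sat_lifting MAB MC liftC (lm_of elemsC) C_domain); last exact: sat_prod Auv Buv.
- by vm_compute.
- by [].
move=> m [a b] dom_ab.
have := all_ordP (all_ordP (all_ordP cover m) a) b.
by rewrite dom_ab => /andP[dom_mab /eqP proj_mab]; split.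
Qed.

Definition sigmaL : word := [:: 0; 1; 0; 2; 2].
Definition sigmaR : word := [:: 0; 1; 2; 0; 2].
Definition tauL : word := [:: 0; 0; 1; 0; 2; 2].
Definition tauR : word := [:: 0; 0; 1; 2; 0; 2].

Lemma MA_sigma : sat MA sigmaL sigmaR.
Proof. by apply: finite_sat3; vm_compute. Qed.

Lemma MA_tau : sat MA tauL tauR.
Proof. by apply: finite_sat3; vm_compute. Qed.

Lemma MB_sigmaL_tauL : sat MB sigmaL tauL.
Proof. by apply: finite_sat3; vm_compute. Qed.

Lemma MB_tauR_sigmaR : sat MB tauR sigmaR.
Proof. by apply: finite_sat3; vm_compute. Qed.

Lemma MC_tau : sat MC tauL tauR.
Proof. by apply: finite_sat3; vm_compute. Qed.

Lemma MC_not_sigma : ~ sat MC sigmaL sigmaR.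
Proof. by move=> /(_ (fun k => lm_of elemsC (psi k))) /eqP; vm_compute. Qed.

Lemma V_main_MA : V_main MA.
Proof. exact: vjoin_mem var_MA var_MB MA_monoid (fun u v Auv _ => Auv). Qed.

Lemma V_main_MB : V_main MB.
Proof. exact: vjoin_mem var_MA var_MB MB_monoid (fun u v _ Buv => Buv). Qed.

Lemma V_main_MC : V_main MC.
Proof. exact: vjoin_mem var_MA var_MB MC_monoid MC_sat. Qed.

Definition var_AC : mclass := vjoin (var_of MA) (var_of MC).

Lemma subvariety_var_of (A : magma) : V_main A -> subvariety (var_of A) V_main.
Proof. by move=> VA; split; [exact: var_gen_variety | exact: var_of_sub]. Qed.

Lemma subvariety_var_AC : subvariety var_AC V_main.
Proof.
split; first exact: var_gen_variety.
by apply: var_gen_sub => A [|]; apply: var_of_sub; [exact: V_main_MA | exact: V_main_MC].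
Qed.

Lemma var_MA_sub_var_AC : vsub (var_of MA) var_AC.
Proof.
apply: var_of_sub; apply: var_gen_mem MA_monoid _.
by left; exact: var_of_self MA_monoid.
Qed.

Lemma MC_in_join_meet : vmeet (vjoin (var_of MA) (var_of MB)) var_AC MC.
Proof.
split; first exact: vjoin_mem (var_of_self MA_monoid) (var_of_self MB_monoid) MC_monoid MC_sat.
by apply: var_gen_mem MC_monoid _; right; exact: var_of_self MC_monoid.
Qed.

Lemma sigma_var_MA_or_meet (D : magma) :
  var_of MA D \/ vmeet (var_of MB) var_AC D -> sat D sigmaL sigmaR.
Proof.
case=> [AD|[BD [_ ACD]] f]; first exact: var_of_sat AD MA_sigma.
have tau_D : sat D tauL tauR.
  apply: ACD => E [/var_of_sat AE|/var_of_sat CE]; [exact: AE MA_tau | exact: CE MC_tau].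
rewrite (var_of_sat BD MB_sigmaL_tauL f) tau_D.
exact: var_of_sat BD MB_tauR_sigmaR f.
Qed.

Theorem proposition5p1 : ~ subvar_lattice_modular V_main.
Proof.
move=> modular.
have [_ join_meet_sub] := modular _ _ _ (subvariety_var_of V_main_MA)
  (subvariety_var_of V_main_MB) subvariety_var_AC var_MA_sub_var_AC MC.
apply: MC_not_sigma; have [_] := join_meet_sub MC_in_join_meet; apply.
exact: sigma_var_MA_or_meet.
Qed.
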